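(* Let $M>0$ and $p,K\in\mathbb{N}$. Let $\boldsymbol\Phi(p,K)$ denote the set of all continuous maps from $\mathbb{R}^p$ to $\mathbb{R}^K$. Then \[ \inf_{\boldsymbol \phi \in \boldsymbol \Phi(p,K)} \frac{1}{(2M)^{2p}} \int_{[-M,M]^{p}} \int_{[-M,M]^{p}} \Big| -\|\boldsymbol x-\boldsymbol x'\|_2^2 - \langle \boldsymbol \phi(\boldsymbol x),\boldsymbol \phi(\boldsymbol x') \rangle \Big| \,\mathrm{d} \boldsymbol x\, \mathrm{d} \boldsymbol x' \geq \frac{2pM^2}{3}. \]
   Context: $\langle\cdot,\cdot\rangle$ denotes the standard Euclidean inner product on $\mathbb{R}^K$ and $\|\cdot\|_2$ the Euclidean norm on $\mathbb{R}^p$. *)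

From HB Require Import structures.
From mathcomp Require Import all_boot all_order all_algebra.
From mathcomp Require Import all_classical all_reals all_analysis.
Set Implicit Arguments. Unset Strict Implicit. Unset Printing Implicit Defensive.
Import Order.TTheory GRing.Theory Num.Theory.
Import numFieldNormedType.Exports.
Local Open Scope classical_set_scope.
Local Open Scope ring_scope.

Definition sqdist (R : realType) (n : nat) (x y : 'rV[R]_n) : R :=
  \sum_(i < n) (x ord0 i - y ord0 i) ^+ 2.

Definition dotp (R : realType) (n : nat) (u v : 'rV[R]_n) : R :=
  \sum_(i < n) u ord0 i * v ord0 i.

Definition vcons (R : realType) (n : nat) (t : R) (v : 'rV[R]_n) : 'rV[R]_n.+1 :=
  \row_(i < n.+1) (if unlift ord0 i is Some j then v ord0 j else t).

(* Lebesgue integral over the cube [-M,M]^n of a (nonnegative) function,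
   computed as the iterated one-dimensional Lebesgue integrals over [-M,M]
   (equal to the n-dimensional Lebesgue integral by Tonelli). *)
Fixpoint cube_integral (R : realType) (M : R) (n : nat) :
    ('rV[R]_n -> \bar R) -> \bar R :=
  match n with
  | 0 => fun f => f 0%R
  | n'.+1 => fun f =>
      (\int[@lebesgue_measure R]_(t in `[(- M)%R, M%R]%classic)
         cube_integral M (fun v : 'rV[R]_n' => f (vcons t v)))%E
  end.

Definition embedding_error (R : realType) (M : R) (p K : nat)
    (phi : 'rV[R]_p -> 'rV[R]_K) : \bar R :=
  ((((2 * M) ^+ (2 * p))^-1)%:E *
    cube_integral M (fun x : 'rV[R]_p =>
      cube_integral M (fun x' : 'rV[R]_p =>
        (`| - sqdist x x' - dotp (phi x) (phi x') |)%:E)))%E.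

From HB Require Import structures.
From mathcomp Require Import all_boot all_order all_algebra.
From mathcomp Require Import all_classical all_reals all_analysis.
From mathcomp Require Import ring lra.
Import Order.TTheory GRing.Theory Num.Theory.
Import numFieldNormedType.Exports.
Local Open Scope classical_set_scope.
Local Open Scope ring_scope.

(* Since |a| >= -a, the integrand |-|x - x'|^2 - <phi x, phi x'>| dominates
   |x - x'|^2 + <phi x, phi x'>.  Integrated over the cube twice, the inner-product
   term becomes the squared norm of the integral of phi, hence is nonnegative, while
   the mean of |x - x'|^2 is p times the mean 2 M^2 / 3 of (s - t)^2 over [-M, M]^2.
   The iterated integrals are handled through continuity: an integral over the
   compact segment of a jointly continuous function depends continuously on the
   parameter, so every iterated integrand is continuous, hence integrable, and the
   iterated integrals are finite, linear and monotone. *)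

Section ProductContinuity.
Context {T U V : topologicalType}.

Lemma continuous_fst : continuous (fun z : T * U => z.1).
Proof. by move=> [a b]; exact: cvg_fst. Qed.

Lemma continuous_snd : continuous (fun z : T * U => z.2).
Proof. by move=> [a b]; exact: cvg_snd. Qed.

Lemma continuous_pair {f : T -> U} {g : T -> V} :
  continuous f -> continuous g -> continuous (fun x => (f x, g x)).
Proof. by move=> cf cg x; apply: cvg_pair; [exact: cf | exact: cg]. Qed.

Lemma continuousT_comp {f : T -> U} {g : U -> V} :
  continuous f -> continuous g -> continuous (fun x => g (f x)).
Proof. by move=> cf cg x; apply: continuous_comp; [exact: cf | exact: cg]. Qed.

End ProductContinuity.

Lemma continuousT_comp2 {T U V W : topologicalType} {f : T -> U} {g : T -> V}
    {H : U -> V -> W} :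
  continuous f -> continuous g -> continuous (fun z : U * V => H z.1 z.2) ->
  continuous (fun x => H (f x) (g x)).
Proof. by move=> cf cg; exact: continuousT_comp (continuous_pair cf cg). Qed.

Lemma continuous_pairl {T U : topologicalType} (t : T) :
  continuous (fun u : U => (t, u)).
Proof. by apply: continuous_pair => [|u]; [exact: cst_continuous | exact: cvg_id]. Qed.

Lemma continuous_slice {T U V : topologicalType} {G : T -> U -> V} (t : T) :
  continuous (fun z : T * U => G z.1 z.2) -> continuous (G t).
Proof. by move=> cG u; exact: continuous_comp (continuous_pairl t u) (cG (t, u)). Qed.

Section RealContinuity.
Context {R : realType} {T : topologicalType}.

Lemma continuousfD {f g : T -> R} : continuous f -> continuous g ->
  continuous (fun x => f x + g x).
Proof. by move=> cf cg x; exact: (@continuousD R R^o T f g x (cf x) (cg x)). Qed.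

Lemma continuousfN {f : T -> R} : continuous f -> continuous (fun x => - f x).
Proof. by move=> cf x; exact: (@continuousN R R^o T f x (cf x)). Qed.

Lemma continuousfB {f g : T -> R} : continuous f -> continuous g ->
  continuous (fun x => f x - g x).
Proof. by move=> cf cg; apply: continuousfD => //; exact: continuousfN. Qed.

Lemma continuousfM {f g : T -> R} : continuous f -> continuous g ->
  continuous (fun x => f x * g x).
Proof. by move=> cf cg x; exact: (@continuousM R T f g x (cf x) (cg x)). Qed.

Lemma continuousfMl (c : R) {f : T -> R} : continuous f -> continuous (fun x => c * f x).
Proof. by apply: continuousfM; exact: cst_continuous. Qed.

Lemma continuousfX {f : T -> R} n : continuous f -> continuous (fun x => f x ^+ n).
Proof. by move=> cf; exact: (continuousT_comp cf (@exprn_continuous R n)). Qed.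

Lemma continuousf_norm {f : T -> R} : continuous f -> continuous (fun x => `|f x|).
Proof. by move=> cf; exact: (continuousT_comp cf (@norm_continuous _ R^o)). Qed.

Lemma continuousf_sum (I : Type) (r : seq I) (F : I -> T -> R) :
  (forall i, continuous (F i)) -> continuous (fun x => \sum_(i <- r) F i x).
Proof.
move=> cF; elim: r => [|a r IH].
  under eq_fun do rewrite big_nil; exact: cst_continuous.
under eq_fun do rewrite big_cons; exact: continuousfD.
Qed.

End RealContinuity.

Lemma near_uniform_compact {R : realType} {T X : topologicalType} {A : set X}
    {G : T -> X -> R} (y0 : T) {e : R} :
  compact A -> continuous (fun z : T * X => G z.1 z.2) -> 0 < e ->
  \forall y \near y0, forall t, A t -> `|G y0 t - G y t| < e.
Proof.
move=> cptA cG e_gt0.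
apply: ((compact_near_coveringP A).1 cptA T (nbhs y0) (fun y t => `|G y0 t - G y t| < e)).
move=> t _; have e2_gt0 : 0 < e / 2 by rewrite divr_gt0.
have [[U V] /= [Uy0 Vt] sUV] := cG (y0, t) _ (nbhsx_ballx _ _ e2_gt0).
exists (V, U) => //= -[t' y] /= [Vt' Uy].
have := sUV (y0, t') (conj (nbhs_singleton Uy0) Vt'); rewrite /ball /= => near_y0.
have := sUV (y, t') (conj Uy Vt'); rewrite /ball /= => near_y.
have -> : G y0 t' - G y t' = (G y0 t - G y t') - (G y0 t - G y0 t') by ring.
by apply: le_lt_trans (ler_normB _ _) _; rewrite [ltRHS](splitr e) ltrD.
Qed.

Section VectorContinuity.
Context {R : realType}.

Lemma rV_coord_continuous {n} (i : 'I_n) : continuous (fun v : 'rV[R]_n => v ord0 i).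
Proof. exact: coord_continuous. Qed.

Lemma continuous_rV (T : topologicalType) n (f : T -> 'rV[R]_n) :
  (forall j, continuous (fun x => f x ord0 j)) -> continuous f.
Proof.
move=> cf x A /nbhs_ballP[e /= e0 eA].
have : \forall y \near x, forall i j, ball (f x i j) e (f y i j).
  apply: filter_forall => i; apply: filter_forall => j.
  by rewrite ord1; exact: (cf j x _ (nbhsx_ballx _ _ e0)).
by apply: filterS => y fxy; apply: eA; split.
Qed.

Lemma continuous_vcons n : continuous (fun z : R * 'rV[R]_n => vcons z.1 z.2).
Proof.
apply: continuous_rV => j; rewrite /vcons.
under eq_fun do rewrite mxE.
case: (unlift ord0 j) => [k|]; last exact: continuous_fst.
exact: (continuousT_comp (@continuous_snd R _) (@rV_coord_continuous n k)).
Qed.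

Lemma vcons0 n (t : R) (v : 'rV[R]_n) : vcons t v ord0 ord0 = t.
Proof. by rewrite mxE unlift_none. Qed.

Lemma vcons_lift n (t : R) (v : 'rV[R]_n) (j : 'I_n) :
  vcons t v ord0 (lift ord0 j) = v ord0 j.
Proof. by rewrite mxE liftK. Qed.

Lemma continuous_sqdist n : continuous (fun z : 'rV[R]_n * 'rV[R]_n => sqdist z.1 z.2).
Proof.
apply: continuousf_sum => i; apply: continuousfX; apply: continuousfB.
- exact: (continuousT_comp (@continuous_fst 'rV[R]_n 'rV[R]_n) (rV_coord_continuous i)).
- exact: (continuousT_comp (@continuous_snd 'rV[R]_n 'rV[R]_n) (rV_coord_continuous i)).
Qed.

Lemma continuous_dotp n : continuous (fun z : 'rV[R]_n * 'rV[R]_n => dotp z.1 z.2).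
Proof.
apply: continuousf_sum => i; apply: continuousfM.
- exact: (continuousT_comp (@continuous_fst 'rV[R]_n 'rV[R]_n) (rV_coord_continuous i)).
- exact: (continuousT_comp (@continuous_snd 'rV[R]_n 'rV[R]_n) (rV_coord_continuous i)).
Qed.

Lemma continuous_dotp_comp {n K} {phi : 'rV[R]_n -> 'rV[R]_K} : continuous phi ->
  continuous (fun z : 'rV[R]_n * 'rV[R]_n => dotp (phi z.1) (phi z.2)).
Proof.
move=> cphi; apply: continuousT_comp2 (continuous_dotp K).
- exact: continuousT_comp continuous_fst cphi.
- exact: continuousT_comp continuous_snd cphi.
Qed.

End VectorContinuity.

Section SegmentIntegral.
Context {R : realType} (M : R).
Hypothesis M_gt0 : 0 < M.
Local Notation mu := (@lebesgue_measure R).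
Local Notation I := `[(- M)%R, M%R]%classic.

Definition seg_integral (g : R -> R) := Rintegral mu I g.

Lemma measurable_seg : measurable (I : set (measurableTypeR R)).
Proof. exact: measurable_itv. Qed.

Lemma seg_integrable {g : R -> R} : continuous g -> mu.-integrable I (EFin \o g).
Proof.
move=> cg; apply: continuous_compact_integrable; first exact: segment_compact.
exact: continuous_subspaceT.
Qed.

Lemma seg_integralE (g : R -> R) : continuous g ->
  (\int[mu]_(x in I) (g x)%:E)%E = (seg_integral g)%:E.
Proof.
move=> cg; rewrite /seg_integral /Rintegral fineK //.
by apply: integrable_fin_num; [exact: measurable_seg | exact: seg_integrable].
Qed.

Lemma seg_integral_cst (c : R) : seg_integral (fun=> c) = c * (2 * M).
Proof.
have NM_lt_M : - M < M by have := M_gt0; lra.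
have muI : mu I = (2 * M)%:E.
  by rewrite lebesgue_measure_itv /= lte_fin NM_lt_M -EFinD opprK -mulr2n mulr_natl.
rewrite /seg_integral (Rintegral_cst mu measurable_seg).
by congr (_ * _); exact: (congr1 fine muI).
Qed.

Lemma seg_integralD (f g : R -> R) : continuous f -> continuous g ->
  seg_integral (fun x => f x + g x) = seg_integral f + seg_integral g.
Proof.
move=> cf cg.
by rewrite /seg_integral (RintegralD measurable_seg (seg_integrable cf) (seg_integrable cg)).
Qed.

Lemma seg_integralZ (c : R) (f : R -> R) : continuous f ->
  seg_integral (fun x => c * f x) = c * seg_integral f.
Proof.
by move=> cf; rewrite /seg_integral (RintegralZl c measurable_seg (seg_integrable cf)).
Qed.

Lemma ler_seg_integral (f g : R -> R) : continuous f -> continuous g ->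
  (forall x, f x <= g x) -> seg_integral f <= seg_integral g.
Proof.
move=> cf cg fg.
by rewrite /seg_integral (le_Rintegral measurable_seg (seg_integrable cf) (seg_integrable cg)).
Qed.

Lemma seg_integral_pow k :
  seg_integral (fun t => t ^+ k) = (M ^+ k.+1 - (- M) ^+ k.+1) / k.+1%:R.
Proof.
pose F x : R := x ^+ k.+1 / k.+1%:R.
have cF : continuous F.
  by apply: continuousfM; [exact: exprn_continuous | exact: cst_continuous].
have NM_lt_M : - M < M by have := M_gt0; lra.
have F'E : {in `](- M), M[, (F^`())%classic =1 (fun t => t ^+ k)}.
  move=> x _; rewrite /F derive1Mr; last exact: exprn_derivable.
  rewrite derive1E exp_derive /= [_%:A]mulr1 -[_ *: _]/(_ * _) mulrC mulrA.
  by rewrite mulVf ?mul1r // pnatr_eq0.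
have F_ok : derivable_oo_LRcontinuous F (- M) M.
  split; last 2 first.
  - exact: cvg_at_right_filter (cF _).
  - exact: cvg_at_left_filter (cF _).
  by move=> x _; apply: derivableM; [exact: exprn_derivable | exact: derivable_cst].
have := continuous_FTC2 NM_lt_M (continuous_subspaceT (@exprn_continuous R k)) F_ok F'E.
by rewrite seg_integralE; [move=> [->]; rewrite /F mulrBl | exact: exprn_continuous].
Qed.

Lemma continuous_seg_integral {T : topologicalType} (G : T -> R -> R) :
  continuous (fun z : T * R => G z.1 z.2) -> continuous (fun y => seg_integral (G y)).
Proof.
move=> cG y0; apply/cvgrPdist_lt => e e_gt0.
have cGy y : continuous (G y) by exact: continuous_slice.
have e'_gt0 : 0 < e / (4 * M) by rewrite divr_gt0 // mulr_gt0.
near=> y.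
have cGB := continuousfB (cGy y0) (cGy y).
rewrite /seg_integral.
rewrite -(RintegralB measurable_seg (seg_integrable (cGy y0)) (seg_integrable (cGy y))).
apply: le_lt_trans (le_normr_Rintegral measurable_seg (seg_integrable cGB)) _.
apply: (@le_lt_trans _ _ (seg_integral (fun=> e / (4 * M)))).
  apply: (le_Rintegral measurable_seg (seg_integrable (continuousf_norm cGB))
    (seg_integrable (@cst_continuous _ _ (e / (4 * M))))) => t It; apply: ltW.
  exact: (near (near_uniform_compact y0 (@segment_compact R (- M) M) cG e'_gt0) y).
rewrite seg_integral_cst.
have -> : e / (4 * M) * (2 * M) = e / 2 by field; rewrite gt_eqF.
by rewrite ltr_pdivrMr // ltr_pMr // ltr1n.
Unshelve. all: end_near.
Qed.

Lemma seg_integral_sqrB :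
  seg_integral (fun s => seg_integral (fun t => (s - t) ^+ 2)) =
  (2 * M) ^+ 2 * (2 * M ^+ 2 / 3).
Proof.
have cX k : continuous (fun t : R => t ^+ k) := @exprn_continuous R k.
have inner s : seg_integral (fun t => (s - t) ^+ 2) = 2 * M * s ^+ 2 + 2 * M ^+ 3 / 3.
  have -> : (fun t => (s - t) ^+ 2) = (fun t => (s ^+ 2 + - (2 * s) * t ^+ 1) + t ^+ 2).
    by apply/funext => t; ring.
  rewrite seg_integralD //; last first.
    by apply: continuousfD; [exact: cst_continuous | exact: continuousfMl].
  rewrite seg_integralD //; [|exact: cst_continuous | exact: continuousfMl].
  by rewrite seg_integral_cst seg_integralZ // !seg_integral_pow; field.
under eq_fun do rewrite inner.
rewrite seg_integralD; [|exact: continuousfMl | exact: cst_continuous].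
by rewrite seg_integralZ // seg_integral_cst seg_integral_pow; field.
Qed.

End SegmentIntegral.

Section CubeIntegral.
Context {R : realType} (M : R).
Hypothesis M_gt0 : 0 < M.
Local Notation seg_integral := (seg_integral M).

Definition cube_integralr {n} (f : 'rV[R]_n -> R) : R :=
  fine (cube_integral M (fun v => (f v)%:E)).

Lemma continuous_vcons_comp {n} {f : 'rV[R]_n.+1 -> R} : continuous f ->
  continuous (fun z : R * 'rV[R]_n => f (vcons z.1 z.2)).
Proof. exact: continuousT_comp (@continuous_vcons R n). Qed.

Lemma continuous_vcons_slice {n} {f : 'rV[R]_n.+1 -> R} (t : R) : continuous f ->
  continuous (fun v : 'rV[R]_n => f (vcons t v)).
Proof.
move=> cf.
exact: (continuous_slice (G := fun t v => f (vcons t v)) t (continuous_vcons_comp cf)).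
Qed.

Lemma cube_integral_param {n} {T : topologicalType} {H : T -> 'rV[R]_n -> R} :
  continuous (fun z : T * 'rV[R]_n => H z.1 z.2) ->
  exists2 J : T -> R, continuous J &
    forall y, cube_integral M (fun v => (H y v)%:E) = (J y)%:E.
Proof.
elim: n T H => [|n IH] T H cH.
  exists (fun y => H y 0) => //.
  by apply: continuousT_comp2 cH => [y|]; [exact: cvg_id | exact: cst_continuous].
pose H' (yt : T * R) v := H yt.1 (vcons yt.2 v).
have cH' : continuous (fun z : (T * R) * 'rV[R]_n => H' z.1 z.2).
  apply: continuousT_comp2 cH.
    exact: continuousT_comp continuous_fst continuous_fst.
  apply: continuousT_comp2 (@continuous_vcons R n).
    exact: continuousT_comp continuous_fst continuous_snd.
  exact: continuous_snd.
have [J' cJ' H'E] := IH _ _ cH'.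
exists (fun y => seg_integral (fun t => J' (y, t))).
  apply: (continuous_seg_integral _ M_gt0 (fun y t => J' (y, t))).
  by under eq_fun do rewrite -surjective_pairing.
move=> y /=; rewrite -seg_integralE; last first.
  exact: continuousT_comp (continuous_pairl y) cJ'.
by congr (integral _ _ _); apply/funext => t; exact: H'E (y, t).
Qed.

Lemma cube_integralrE n (f : 'rV[R]_n -> R) : continuous f ->
  cube_integral M (fun v => (f v)%:E) = (cube_integralr f)%:E.
Proof.
move=> cf; have [J _ JE] := @cube_integral_param n R (fun _ v => f v)
  (continuousT_comp continuous_snd cf).
by rewrite /cube_integralr (JE 0).
Qed.

Lemma continuous_cube_integralr {n} {T : topologicalType} {H : T -> 'rV[R]_n -> R} :
  continuous (fun z : T * 'rV[R]_n => H z.1 z.2) ->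
  continuous (fun y => cube_integralr (H y)).
Proof.
move=> cH; have [J cJ JE] := cube_integral_param cH.
suff -> : (fun y => cube_integralr (H y)) = J by [].
by apply/funext => y; rewrite /cube_integralr JE.
Qed.

Lemma cube_integralrS n (f : 'rV[R]_n.+1 -> R) : continuous f ->
  cube_integralr f = seg_integral (fun t => cube_integralr (fun v => f (vcons t v))).
Proof.
move=> cf; have cfv := continuous_vcons_comp cf.
rewrite {1}/cube_integralr /=.
have -> : (fun t => cube_integral M (fun v : 'rV_n => (f (vcons t v))%:E)) =
          (fun t => (cube_integralr (fun v => f (vcons t v)))%:E).
  by apply/funext => t; rewrite cube_integralrE //; exact: continuous_vcons_slice.
by rewrite seg_integralE //; exact: continuous_cube_integralr.
Qed.

Lemma continuous_cube_integralr_vcons n (f : 'rV[R]_n.+1 -> R) : continuous f ->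
  continuous (fun t => cube_integralr (fun v : 'rV[R]_n => f (vcons t v))).
Proof. by move=> cf; exact: continuous_cube_integralr (continuous_vcons_comp cf). Qed.

Lemma cube_integralr_cst n (c : R) :
  cube_integralr (fun _ : 'rV[R]_n => c) = c * (2 * M) ^+ n.
Proof.
elim: n => [|n IH]; first by rewrite /cube_integralr /= expr0 mulr1.
rewrite cube_integralrS; last exact: cst_continuous.
by rewrite IH seg_integral_cst // exprS; ring.
Qed.

Lemma cube_integralrD n (f g : 'rV[R]_n -> R) : continuous f -> continuous g ->
  cube_integralr (fun v => f v + g v) = cube_integralr f + cube_integralr g.
Proof.
elim: n f g => [//|n IH] f g cf cg.
rewrite !cube_integralrS //; last exact: continuousfD.
rewrite -seg_integralD; try exact: continuous_cube_integralr_vcons.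
by congr seg_integral; apply/funext => t; rewrite IH //; exact: continuous_vcons_slice.
Qed.

Lemma cube_integralrZ n (c : R) (f : 'rV[R]_n -> R) : continuous f ->
  cube_integralr (fun v => c * f v) = c * cube_integralr f.
Proof.
elim: n f => [//|n IH] f cf.
rewrite !cube_integralrS //; last exact: continuousfMl.
rewrite -seg_integralZ; last exact: continuous_cube_integralr_vcons.
by congr seg_integral; apply/funext => t; rewrite IH //; exact: continuous_vcons_slice.
Qed.

Lemma ler_cube_integralr n (f g : 'rV[R]_n -> R) : continuous f -> continuous g ->
  (forall v, f v <= g v) -> cube_integralr f <= cube_integralr g.
Proof.
elim: n f g => [|n IH] f g cf cg fg; first by rewrite /cube_integralr /=.
rewrite !cube_integralrS //.
apply: ler_seg_integral; try exact: continuous_cube_integralr_vcons.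
by move=> t; apply: IH => //; exact: continuous_vcons_slice.
Qed.

Lemma cube_integralr_sum n (I : Type) (r : seq I) (F : I -> 'rV[R]_n -> R) :
  (forall i, continuous (F i)) ->
  cube_integralr (fun v => \sum_(i <- r) F i v) = \sum_(i <- r) cube_integralr (F i).
Proof.
move=> cF; elim: r => [|a r IH].
  by under eq_fun do rewrite big_nil; rewrite big_nil cube_integralr_cst mul0r.
under eq_fun do rewrite big_cons.
by rewrite big_cons cube_integralrD ?IH //; exact: continuousf_sum.
Qed.

Lemma cube_integralr_coord {n} (i : 'I_n) {g : R -> R} : continuous g ->
  cube_integralr (fun v : 'rV[R]_n => g (v ord0 i)) = (2 * M) ^+ n.-1 * seg_integral g.
Proof.
case: n i => [[]//|n] i cg /=.
have cgi m (k : 'I_m) : continuous (fun v : 'rV[R]_m => g (v ord0 k)).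
  exact: continuousT_comp (rV_coord_continuous k) cg.
have coord0 m : cube_integralr (fun v : 'rV[R]_m.+1 => g (v ord0 ord0)) =
    (2 * M) ^+ m * seg_integral g.
  rewrite cube_integralrS //; under eq_fun do under eq_fun do rewrite vcons0.
  by under eq_fun do rewrite cube_integralr_cst mulrC; rewrite seg_integralZ.
elim: n i => [|n IH] i; first by rewrite [i]ord1 coord0.
case: (unliftP ord0 i) => [j ->|->]; last exact: coord0.
rewrite cube_integralrS //; under eq_fun do under eq_fun do rewrite vcons_lift.
by rewrite IH seg_integral_cst // exprS; ring.
Qed.

Definition double_cube_integralr {n} (H : 'rV[R]_n -> 'rV[R]_n -> R) : R :=
  cube_integralr (fun x => cube_integralr (H x)).

Section DoubleIntegral.
Context {n : nat} {H G : 'rV[R]_n -> 'rV[R]_n -> R}.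
Hypotheses (cH : continuous (fun z : 'rV[R]_n * 'rV[R]_n => H z.1 z.2))
           (cG : continuous (fun z : 'rV[R]_n * 'rV[R]_n => G z.1 z.2)).

Lemma double_cube_integralE :
  cube_integral M (fun x => cube_integral M (fun x' => (H x x')%:E)) =
  (double_cube_integralr H)%:E.
Proof.
have -> : (fun x => cube_integral M (fun x' => (H x x')%:E)) =
          (fun x => (cube_integralr (H x))%:E).
  by apply/funext => x; rewrite cube_integralrE //; exact: continuous_slice.
by rewrite cube_integralrE //; exact: continuous_cube_integralr.
Qed.

Lemma double_cube_integralrD :
  double_cube_integralr (fun x x' => H x x' + G x x') =
  double_cube_integralr H + double_cube_integralr G.
Proof.
rewrite /double_cube_integralr.
have -> : (fun x => cube_integralr (fun x' => H x x' + G x x')) =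
          (fun x => cube_integralr (H x) + cube_integralr (G x)).
  by apply/funext => x; apply: cube_integralrD; exact: continuous_slice.
by rewrite cube_integralrD //; exact: continuous_cube_integralr.
Qed.

Lemma ler_double_cube_integralr : (forall x x', H x x' <= G x x') ->
  double_cube_integralr H <= double_cube_integralr G.
Proof.
move=> HG; apply: ler_cube_integralr; try exact: continuous_cube_integralr.
by move=> x; apply: ler_cube_integralr => //; exact: continuous_slice.
Qed.

End DoubleIntegral.

Lemma double_cube_integralr_sqdist n :
  double_cube_integralr (@sqdist R n) = n%:R * (2 * M) ^+ (2 * n) * (2 * M ^+ 2 / 3).
Proof.
pose S (s : R) := seg_integral (fun t => (s - t) ^+ 2).
have cS : continuous S.
  apply: (continuous_seg_integral _ M_gt0 (fun s t => (s - t) ^+ 2)).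
  by apply: continuousfX; apply: continuousfB; [exact: continuous_fst | exact: continuous_snd].
have cSi i : continuous (fun x : 'rV[R]_n => S (x ord0 i)).
  exact: continuousT_comp (rV_coord_continuous i) cS.
have inner x : cube_integralr (sqdist x) = \sum_(i < n) (2 * M) ^+ n.-1 * S (x ord0 i).
  have cg i : continuous (fun t : R => (x ord0 i - t) ^+ 2).
    apply: continuousfX; apply: continuousfB; first exact: cst_continuous.
    by move=> ?; exact: cvg_id.
  rewrite cube_integralr_sum => [|i]; last first.
    exact: continuousT_comp (rV_coord_continuous i) (cg i).
  by apply: eq_bigr => i _; rewrite (cube_integralr_coord i (cg i)).
rewrite /double_cube_integralr; under eq_fun do rewrite inner.
rewrite cube_integralr_sum => [|i]; last exact: continuousfMl.
under eq_bigr do rewrite cube_integralrZ ?(cube_integralr_coord _ cS) ?seg_integral_sqrB //.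
rewrite sumr_const card_ord -[_ *+ n]mulr_natl.
case: n {inner cSi} => [|n]; first by rewrite !mul0r.
by rewrite [n.+1.-1]/= mulnC exprM [(2 * M) ^+ n.+1]exprS; ring.
Qed.

Lemma double_cube_integralr_dotp n K (phi : 'rV[R]_n -> 'rV[R]_K) : continuous phi ->
  double_cube_integralr (fun x x' => dotp (phi x) (phi x')) =
  \sum_(k < K) cube_integralr (fun x => phi x ord0 k) ^+ 2.
Proof.
move=> cphi.
have cphik k : continuous (fun x => phi x ord0 k).
  exact: continuousT_comp cphi (rV_coord_continuous k).
have inner x : cube_integralr (fun x' => dotp (phi x) (phi x')) =
    \sum_(k < K) phi x ord0 k * cube_integralr (fun x' => phi x' ord0 k).
  rewrite /dotp cube_integralr_sum => [|k]; last exact: continuousfMl.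
  by apply: eq_bigr => k _; rewrite cube_integralrZ.
rewrite /double_cube_integralr; under eq_fun do rewrite inner.
rewrite cube_integralr_sum => [|k]; last by apply: continuousfM => //; exact: cst_continuous.
apply: eq_bigr => k _; under eq_fun do rewrite mulrC.
by rewrite cube_integralrZ // expr2.
Qed.

End CubeIntegral.

Theorem proposition4p1 (R : realType) (M : R) (p K : nat) (hM : 0 < M) :
  ((2 * p%:R * M ^+ 2 / 3)%:E <=
   ereal_inf [set @embedding_error R M p K phi |
                phi in [set phi : 'rV[R]_p -> 'rV[R]_K | continuous phi]])%E.
Proof.
apply: le_ereal_inf_tmp => _ [phi cphi <-].
pose Q x x' := sqdist x x' + dotp (phi x) (phi x').
have cQ : continuous (fun z : 'rV[R]_p * 'rV[R]_p => Q z.1 z.2).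
  exact: continuousfD (continuous_sqdist p) (continuous_dotp_comp cphi).
rewrite /embedding_error.
have -> : (fun x => cube_integral M (fun x' =>
            (`| - sqdist x x' - dotp (phi x) (phi x') |)%:E)) =
          (fun x => cube_integral M (fun x' => (`| Q x x' |)%:E)).
  by apply/funext => x; congr cube_integral; apply/funext => x'; rewrite -opprD normrN.
rewrite (double_cube_integralE _ hM (continuousf_norm cQ)) -EFinM lee_fin.
have := ler_double_cube_integralr _ hM cQ (continuousf_norm cQ)
  (fun x x' => ler_norm (Q x x')).
rewrite double_cube_integralrD //; [|exact: continuous_sqdist | exact: continuous_dotp_comp].
rewrite double_cube_integralr_sqdist // double_cube_integralr_dotp //.
have q_gt0 : 0 < (2 * M) ^+ (2 * p) by rewrite exprn_gt0 // mulr_gt0.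
rewrite ler_pdivlMl // => le_error; apply: le_trans le_error.
have -> : (2 * M) ^+ (2 * p) * (2 * p%:R * M ^+ 2 / 3) =
          p%:R * (2 * M) ^+ (2 * p) * (2 * M ^+ 2 / 3) by ring.
by rewrite lerDl sumr_ge0 // => k _; exact: sqr_ge0.
Qed.
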